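(* Let $T_1$ be a quadtree in $\mathbb{R}^d$ and let $j \ge 1$. Given the set of cells $T_j$ with brand $j$ (as in the construction of the extended quadtree described in the context), the set $T_{j+1}$ of cells that balance the cells of $T_j$ is unique.
   Context: A quadtree on an axis-aligned root hypercube $R\subset\mathbb{R}^d$ is a hierarchical decomposition in which every node has an associated axis-aligned hypercube (cell) and is either a leaf or has $2^d$ equal-sized children whose cells subdivide its cell. The size $|C|$ of a cell is its edge length. Two cells are neighbors if they are interior-disjoint and share (part of) a $(d-1)$-dimensional facet. For an integer $j$, a cell $C$ is $2^j$-smooth if every leaf neighboring $C$ has size at most $2^j|C|$. Extended quadtree: the cells of a given quadtree $T_1$ are called true cells and get brand $1$. Recursively, for $j\ge1$, let $T^j$ be the quadtree formed by $\bigcup_{i\le j}T_i$, and let $T_{j+1}$ be the minimal set of cells obtained by splitting cells of $T^j$ such that every cell of $T_j$ is $2^j$-smooth in the resulting quadtree; the cells of $T_{j+1}$ get brand $j+1$. The extended quadtree is $T^*=T^{d+1}$. *)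

From HB Require Import structures.
From mathcomp Require Import all_boot all_order all_algebra.
From mathcomp Require Import finmap.
Set Implicit Arguments. Unset Strict Implicit. Unset Printing Implicit Defensive.
Import Order.TTheory GRing.Theory Num.Theory.

Local Open Scope fset_scope.

(* Cells of a quadtree on the root hypercube R = [0,1]^d (WLOG, by an affine
   change of coordinates, which preserves sizes ratios, neighborhood and
   smoothness).  A cell at depth k with integer coordinate vector v
   (0 <= v i < 2^k) is the cube  prod_i [v_i / 2^k, (v_i + 1) / 2^k]. *)
Definition cell (d : nat) := (nat * {ffun 'I_d -> nat})%type.

Section Cells.
Variable d : nat.
Implicit Types c C L : cell d.

Definition level c : nat := c.1.
Definition coord c (i : 'I_d) : nat := c.2 i.

Definition valid_cell c : bool := [forall i, coord c i < 2 ^ level c].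

Definition root_cell : cell d := (0%N, [ffun=> 0%N]).

Definition lo c (i : 'I_d) : rat := (coord c i)%:R / (2 ^ level c)%:R.
Definition hi c (i : 'I_d) : rat := (coord c i).+1%:R / (2 ^ level c)%:R.

Definition csize c : rat := 1 / (2 ^ level c)%:R.

Definition interior_disjoint C C' : Prop :=
  exists i, (hi C i <= lo C' i)%R \/ (hi C' i <= lo C i)%R.

Definition share_facet_part C C' : Prop :=
  exists i, (hi C i = lo C' i \/ hi C' i = lo C i) /\
    forall i', i' != i ->
      (Order.max (lo C i') (lo C' i') < Order.min (hi C i') (hi C' i'))%R.

Definition neighbors C C' : Prop := interior_disjoint C C' /\ share_facet_part C C'.

Definition is_child c c' : bool :=
  (level c' == (level c).+1) && [forall i, (coord c' i)./2 == coord c i].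

Definition parent c : cell d := ((level c).-1, [ffun i => (coord c i)./2]).

Definition is_quadtree (Q : {fset cell d}) : Prop :=
  [/\ root_cell \in Q,
      forall c, c \in Q -> valid_cell c &
      forall c, c \in Q -> (0 < level c)%N ->
        parent c \in Q /\ forall c', is_child (parent c) c' -> c' \in Q].

Definition is_leaf (Q : {fset cell d}) c : Prop :=
  c \in Q /\ forall c', is_child c c' -> c' \notin Q.

Definition smooth (Q : {fset cell d}) (j : nat) C : Prop :=
  forall L, is_leaf Q L -> neighbors C L ->
    (csize L <= (2 ^ j)%:R * csize C)%R.

Definition balancing (Tup Tj : {fset cell d}) (j : nat) (S : {fset cell d}) : Prop :=
  [/\ forall c, c \in S -> c \notin Tup,
      is_quadtree (Tup `|` S) &
      forall C, C \in Tj -> smooth (Tup `|` S) j C].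

Definition minimal_balancing (Tup Tj : {fset cell d}) (j : nat) (S : {fset cell d}) : Prop :=
  balancing Tup Tj j S /\
  forall S', balancing Tup Tj j S' -> S' `<=` S -> S' = S.

Fixpoint Tupto (T : nat -> {fset cell d}) (i : nat) : {fset cell d} :=
  match i with
  | 0 => fset0
  | i'.+1 => Tupto T i' `|` T i'.+1
  end.

(* T : brand -> cells of that brand is a (partial) run of the extended quadtree
   construction up to brand j *)
Definition extended_run (T : nat -> {fset cell d}) (j : nat) : Prop :=
  is_quadtree (T 1%N) /\
  forall i, (1 <= i < j)%N -> minimal_balancing (Tupto T i) (T i) i (T i.+1).

End Cells.

From Pilot Require Import Defs.
From HB Require Import structures.
From mathcomp Require Import all_boot all_order all_algebra.
From mathcomp Require Import finmap.
From Stdlib Require Import Classical.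
Set Implicit Arguments. Unset Strict Implicit. Unset Printing Implicit Defensive.
Import Order.TTheory GRing.Theory Num.Theory.
Local Open Scope fset_scope.

(* Balancing sets are closed under intersection: a quadtree contains either all
   or none of the children of a node, so a leaf of the intersection of two
   quadtrees is a leaf of one of them and inherits its smoothness bound.  Hence
   two minimal balancing sets both equal their intersection.  A balancing set
   exists: refine uniformly down to the depth of the deepest cell, where every
   leaf is no larger than any cell; being finite, it contains a minimal one. *)

Section MinimalFset.
Variable K : choiceType.
Implicit Types (P : {fset K} -> Prop) (A B : {fset K}).

Definition fset_minimal P A : Prop := P A /\ forall B, P B -> B `<=` A -> B = A.

Lemma fset_minimal_exists P A : P A -> exists B, fset_minimal P B.
Proof.
elim: {A}#|`A|.+1 {-2}A (ltnSn #|`A|) => // n IHn A cardA PA.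
have [minA | not_minA] := classic (fset_minimal P A); first by exists A.
have [B [PB BA neqBA]] : exists B, [/\ P B, B `<=` A & B <> A].
  apply: NNPP => no_smaller; apply: not_minA; split=> // B PB BA.
  by apply: NNPP => neqBA; apply: no_smaller; exists B.
apply: (IHn B) PB; rewrite -ltnS; apply: leq_trans cardA.
by apply: fproper_ltn_card; rewrite fproperEneq BA andbT; apply/eqP.
Qed.

Lemma fset_minimal_unique P A B :
  (forall A B, P A -> P B -> P (A `&` B)) ->
  fset_minimal P A -> fset_minimal P B -> A = B.
Proof.
move=> PI [PA minA] [PB minB]; have PAB := PI _ _ PA PB.
by rewrite -(minA _ PAB (fsubsetIl _ _)) (minB _ PAB (fsubsetIr _ _)).
Qed.

End MinimalFset.

Section Quadtrees.
Variable d : nat.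
Implicit Types (Q : {fset cell d}) (c L : cell d).

Definition first_child L : cell d := ((level L).+1, [ffun i => (Defs.coord L i).*2]).

Lemma is_child_first_child L : is_child L (first_child L).
Proof. by apply/andP; split=> //; apply/forallP => i; rewrite /Defs.coord ffunE doubleK. Qed.

Lemma parent_of_child L c : is_child L c -> parent c = L.
Proof.
case: L => l f /andP[/eqP levc /forallP /= childc]; rewrite /parent levc; congr pair.
by apply/ffunP => i; rewrite ffunE; apply/eqP; exact: childc.
Qed.

Lemma quadtree_sibling Q L c c' :
  is_quadtree Q -> is_child L c -> c \in Q -> is_child L c' -> c' \in Q.
Proof.
move=> [_ _ closedQ] Lc cQ Lc'; have [|_ ->] // := closedQ c cQ.
  by case/andP: Lc => /eqP ->.
by rewrite (parent_of_child Lc).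
Qed.

Lemma quadtree_leafP Q L :
  is_quadtree Q -> L \in Q -> is_leaf Q L <-> first_child L \notin Q.
Proof.
move=> Qtree LQ; split=> [[_ leafL] | notinQ]; first exact/leafL/is_child_first_child.
split=> // c Lc; apply: contra notinQ => cQ.
exact: quadtree_sibling Qtree Lc cQ (is_child_first_child L).
Qed.

Lemma quadtreeI Q1 Q2 : is_quadtree Q1 -> is_quadtree Q2 -> is_quadtree (Q1 `&` Q2).
Proof.
move=> [r1 v1 p1] [r2 v2 p2]; split.
- by rewrite in_fsetI r1 r2.
- by move=> c /fsetIP[/v1].
- move=> c /fsetIP[c1 c2] lc; have [a1 b1] := p1 c c1 lc; have [a2 b2] := p2 c c2 lc.
  by split=> [|c' childc']; rewrite in_fsetI ?a1 ?a2 ?(b1 _ childc') ?(b2 _ childc').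
Qed.

Lemma leafI Q1 Q2 L : is_quadtree Q1 -> is_quadtree Q2 ->
  is_leaf (Q1 `&` Q2) L -> is_leaf Q1 L \/ is_leaf Q2 L.
Proof.
move=> Q1tree Q2tree leafL; have [/fsetIP[L1 L2] _] := leafL.
have LQ : L \in Q1 `&` Q2 by rewrite in_fsetI L1 L2.
move: leafL; rewrite (quadtree_leafP (quadtreeI Q1tree Q2tree) LQ) in_fsetI negb_and.
by case/orP=> [notin1 | notin2]; [left | right]; apply/quadtree_leafP.
Qed.

Lemma smoothI Q1 Q2 j C : is_quadtree Q1 -> is_quadtree Q2 ->
  smooth Q1 j C -> smooth Q2 j C -> smooth (Q1 `&` Q2) j C.
Proof.
move=> Q1tree Q2tree smooth1 smooth2 L /(leafI Q1tree Q2tree)[leaf1 | leaf2].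
- exact: smooth1.
- exact: smooth2.
Qed.

Lemma balancingI (Tup Tj : {fset cell d}) j S1 S2 :
  balancing Tup Tj j S1 -> balancing Tup Tj j S2 -> balancing Tup Tj j (S1 `&` S2).
Proof.
move=> [new1 tree1 smooth1] [new2 tree2 smooth2]; rewrite /balancing fsetUIr; split.
- by move=> c /fsetIP[/new1].
- exact: quadtreeI.
- by move=> C CTj; apply: smoothI; [| | exact: smooth1 | exact: smooth2].
Qed.

Definition complete_tree N : {fset cell d} :=
  [fset c in [fset ((val kx.1, [ffun i => val (kx.2 i)]) : cell d)
               | kx : ('I_N.+1 * {ffun 'I_d -> 'I_(2 ^ N)})%type in {: _}] | valid_cell c].

Lemma in_complete_tree N c :
  (c \in complete_tree N) = (level c <= N)%N && valid_cell c.
Proof.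
rewrite !inE; apply/andP/andP => [[/imfsetP[[k x] _ ->] validc] | [levc validc]].
  by split=> //; rewrite /level /= -ltnS.
split=> //; apply/imfsetP.
have coordN i : (Defs.coord c i < 2 ^ N)%N.
  exact: leq_trans (forallP validc i) (leq_pexp2l _ levc).
exists (Ordinal (levc : level c < N.+1), [ffun i => Ordinal (coordN i)]) => //.
case: c levc validc coordN => l f /= *; congr pair; apply/ffunP => i.
by rewrite !ffunE.
Qed.

Lemma complete_tree_quadtree N : is_quadtree (complete_tree N).
Proof.
split.
- by rewrite in_complete_tree /=; apply/forallP => i; rewrite /Defs.coord ffunE.
- by move=> c; rewrite in_complete_tree => /andP[].
move=> [[|l] f] //; rewrite in_complete_tree => /andP[/= levc /forallP validc] _.
have parent_coord i : ((f i)./2 < 2 ^ l)%N.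
  by rewrite ltn_half_double -mul2n -expnS; exact: validc.
split=> [|c' /andP[/eqP levc' /forallP childc']]; rewrite in_complete_tree.
  apply/andP; split; first exact: ltnW.
  by apply/forallP => i; rewrite /Defs.coord /= ffunE; exact: parent_coord.
rewrite /valid_cell levc' levc; apply/forallP => i.
rewrite expnS mul2n -ltn_half_double (eqP (childc' i)) /Defs.coord ffunE.
exact: parent_coord.
Qed.

Lemma complete_tree_leaf_level N L : is_leaf (complete_tree N) L -> level L = N.
Proof.
move=> leafL; have [LN _] := leafL; move: (LN); rewrite in_complete_tree.
case/andP=> levL /forallP validL; apply/eqP; rewrite eqn_leq levL leqNgt.
apply/negP => ltLN; move: leafL; rewrite (quadtree_leafP (complete_tree_quadtree N) LN).
rewrite in_complete_tree ltLN; apply/negP/negPn/forallP => i.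
by rewrite /Defs.coord ffunE /= expnS mul2n ltn_double; exact: validL.
Qed.

Lemma complete_tree_smooth N j C : (level C <= N)%N -> smooth (complete_tree N) j C.
Proof.
move=> levC L /complete_tree_leaf_level levL _; rewrite /csize levL.
rewrite !div1r; apply: (@le_trans _ _ ((2 ^ level C)%:R^-1)%R).
  by rewrite lef_pV2 ?posrE ?ltr0n ?expn_gt0 // ler_nat leq_pexp2l.
by rewrite ler_peMl ?invr_ge0 ?ler0n // ler1n expn_gt0.
Qed.

Lemma balancing_exists (Tup Tj : {fset cell d}) j :
  is_quadtree Tup -> Tj `<=` Tup -> exists S, balancing Tup Tj j S.
Proof.
move=> [_ validTup _] TjTup; set N := \max_(c <- Tup) level c.
have levTup c : c \in Tup -> (level c <= N)%N by move=> cTup; exact: leq_bigmax_seq.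
have TupN : Tup `<=` complete_tree N.
  by apply/fsubsetP => c cTup; rewrite in_complete_tree levTup ?validTup.
have fillN : Tup `|` (complete_tree N `\` Tup) = complete_tree N.
  by rewrite fsetUDl fsetDv fsetD0; exact/fsetUidPr.
exists (complete_tree N `\` Tup); split; rewrite ?fillN.
- by move=> c /fsetDP[].
- exact: complete_tree_quadtree.
- by move=> C /(fsubsetP TjTup) /levTup; exact: complete_tree_smooth.
Qed.

End Quadtrees.

Lemma Tupto_quadtree d (T : nat -> {fset cell d}) j :
  (1 <= j)%N -> extended_run T j -> is_quadtree (Tupto T j).
Proof.
case: j => [|[|j]] // _ [T1tree run]; first by rewrite /= fset0U.
by have [[_ tree _] _] := run j.+1 (ltnSn _).
Qed.

Theorem lemma12 (d : nat) (T : nat -> {fset cell d}) (j : nat) :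
  (1 <= j)%N -> extended_run T j ->
  exists! S : {fset cell d}, minimal_balancing (Tupto T j) (T j) j S.
Proof.
move=> j_gt0 run; have Tup_tree := Tupto_quadtree j_gt0 run.
have TjTup : T j `<=` Tupto T j by case: j j_gt0 {run Tup_tree} => // j _; exact: fsubsetUr.
have [S0 balS0] := balancing_exists j Tup_tree TjTup.
have [S minS] := fset_minimal_exists balS0.
exists S; split=> // S' minS'.
exact: fset_minimal_unique (@balancingI _ _ _ _) minS minS'.
Qed.
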